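(* Let $R$ be a $*$-ring with unity and $a,b\in R$. The following are equivalent: (i) $a$ and $b$ are generalized comparable; (ii) there exist decompositions $a=x+y$ and $b=z+w$ with $x\perp y$, $z\perp w$, $x\sim z$, and $y,w$ very orthogonal.
   Context: Natural partial order: $a\leq b$ iff there is $x\in R$ with $a=xa=xb=ax^*=bx^*$. Orthogonality: $a\perp b$ iff there is $x\in R$ with $xa=a=ax^*$, $xb=0=bx^*$. Equivalence: $a\sim b$ iff there exist $x,y\in R$ with $aa^*=xx^*$, $bb^*=yy^*$, $a^*a=y^*y$, $b^*b=x^*x$, $x=ax=xb$, $y=by=ya$. Dominance: $a\lesssim b$ iff $a\sim c\leq b$ for some $c$. $a,b$ are generalized comparable if there is a central projection $h$ ($h=h^2=h^*$ central) with $ha\lesssim hb$ and $(1-h)b\lesssim(1-h)a$. $y,w$ are very orthogonal if there is a central projection $h$ with $hy=y$ and $hw=0$ (or with the roles interchanged as needed; the paper's definition: $ha=a$, $hb=0$ for the pair $(a,b)$, and in (ii) $y,w$ very orthogonal is used with $hw=w$, $hy=0$). *)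

From mathcomp Require Import all_boot all_algebra.
Set Implicit Arguments. Unset Strict Implicit. Unset Printing Implicit Defensive.
Import GRing.Theory.
Local Open Scope ring_scope.

Definition is_involution (R : pzRingType) (star : R -> R) : Prop :=
  (forall x y : R, star (x + y) = star x + star y) /\
  (forall x y : R, star (x * y) = star y * star x) /\
  (forall x : R, star (star x) = x).

Section StarDefs.
Variables (R : pzRingType) (star : R -> R).

Definition central_proj (h : R) : Prop :=
  h = h * h /\ h = star h /\ (forall r : R, h * r = r * h).

Definition sleq (a b : R) : Prop :=
  exists x : R, a = x * a /\ a = x * b /\ a = a * star x /\ a = b * star x.

Definition sorth (a b : R) : Prop :=
  exists x : R, x * a = a /\ a = a * star x /\ x * b = 0 /\ 0 = b * star x.

Definition sequiv (a b : R) : Prop :=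
  exists x y : R,
    a * star a = x * star x /\ b * star b = y * star y /\
    star a * a = star y * y /\ star b * b = star x * x /\
    x = a * x /\ a * x = x * b /\ y = b * y /\ b * y = y * a.

Definition sdom (a b : R) : Prop := exists c : R, sequiv a c /\ sleq c b.

Definition gen_comparable (a b : R) : Prop :=
  exists h : R, central_proj h /\
    sdom (h * a) (h * b) /\ sdom ((1 - h) * b) ((1 - h) * a).

Definition very_orth (a b : R) : Prop :=
  exists h : R, central_proj h /\ h * a = a /\ h * b = 0.

End StarDefs.

From mathcomp Require Import all_boot all_algebra.
Set Implicit Arguments. Unset Strict Implicit. Unset Printing Implicit Defensive.
Import GRing.Theory.
Local Open Scope ring_scope.

(* A central projection h splits R into the corners hR and (1-h)R, which
   annihilate each other, and each of the relations ⊥, ~, ≤ is computed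
   corner by corner.  If h a ~ c ≤ h b and (1-h) b ~ d ≤ (1-h) a, then
   c ⊥ h b - c and d ⊥ (1-h) a - d, so x = h a + d and z = c + (1-h) b are
   equivalent, while the remainders w = h b - c and y = (1-h) a - d live in
   the corners hR and (1-h)R.  Conversely, if a central projection k kills y
   and fixes w, then k a = k x ~ k z ≤ k z + k w = k b and symmetrically on
   the other corner, since u ⊥ v gives u ≤ u + v. *)

Section StarRing.
Variables (R : pzRingType) (star : R -> R).
Hypothesis star_inv : is_involution star.

Lemma starD x y : star (x + y) = star x + star y.
Proof. by case: star_inv. Qed.

Lemma starM x y : star (x * y) = star y * star x.
Proof. by case: star_inv => _ []. Qed.

Lemma starK x : star (star x) = x.
Proof. by case: star_inv => _ []. Qed.

Lemma star0 : star 0 = 0.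
Proof. by apply: (addrI (star 0)); rewrite -starD !addr0. Qed.

Lemma starN x : star (- x) = - star x.
Proof. by apply/eqP; rewrite -subr_eq0 opprK -starD addNr star0. Qed.

Lemma starB x y : star (x - y) = star x - star y.
Proof. by rewrite starD starN. Qed.

Lemma star1 : star 1 = 1.
Proof. by rewrite -[LHS]mulr1 -{2}[1]starK -starM mulr1 starK. Qed.

Lemma sorthr0 a : sorth star a 0.
Proof. by exists 1; rewrite star1 mul1r mulr1 mulr0 mul0r. Qed.

Lemma sequiv_sym a b : sequiv star a b -> sequiv star b a.
Proof. by case=> x [y [? [? [? [? [? [? [? ?]]]]]]]]; exists y, x. Qed.

Lemma sleq_sorth_subr c b : sleq star c b -> sorth star c (b - c).
Proof.
case=> u [E1 [E2 [E3 E4]]]; exists u.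
by rewrite mulrBr mulrBl -E1 -E2 -E3 -E4 !subrr.
Qed.

Lemma sorth_sleq_addr c d : sorth star c d -> sleq star c (c + d).
Proof.
case=> u [E1 [E2 [E3 E4]]]; exists u.
by rewrite mulrDr mulrDl E1 E3 -E2 -E4 !addr0.
Qed.

Lemma sleq_corner h c b : sleq star c b -> h * b = b -> h * c = c.
Proof. by case=> u [_ [_ [_ E]]] hb; rewrite E mulrA hb. Qed.

Section CentralProjection.
Variable h : R.
Hypothesis hP : central_proj star h.

Lemma cprojM : h * h = h.
Proof. by case: hP. Qed.

Lemma cprojC r : h * r = r * h.
Proof. by case: hP => _ []. Qed.

Lemma star_cproj : star h = h.
Proof. by case: hP => _ []. Qed.

Lemma cproj_compl : central_proj star (1 - h).
Proof.
split; last split.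
- by rewrite mulrBl mul1r mulrBr mulr1 cprojM subrr subr0.
- by rewrite starB star1 star_cproj.
- by move=> r; rewrite mulrBl mulrBr mul1r mulr1 cprojC.
Qed.

Lemma cproj_mulK r : h * (h * r) = h * r.
Proof. by rewrite mulrA cprojM. Qed.

Lemma cproj_mul_compl : h * (1 - h) = 0.
Proof. by rewrite mulrBr mulr1 cprojM subrr. Qed.

Lemma cproj_compl_mul : (1 - h) * h = 0.
Proof. by rewrite -cprojC cproj_mul_compl. Qed.

Lemma cprojMM p q : h * p * (h * q) = h * (p * q).
Proof. by rewrite -mulrA (mulrA p) -cprojC -mulrA cproj_mulK. Qed.

Lemma star_cprojM p : star (h * p) = h * star p.
Proof. by rewrite starM star_cproj cprojC. Qed.

Lemma star_corner p : h * p = p -> h * star p = star p.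
Proof. by move=> hp; rewrite -star_cprojM hp. Qed.

Lemma corner_mull p r : h * p = p -> h * (p * r) = p * r.
Proof. by move=> hp; rewrite mulrA hp. Qed.

Lemma corner_complM p q : h * p = p -> (1 - h) * q = q -> p * q = 0.
Proof.
move=> hp hq; rewrite -hp -hq [h * p]cprojC -mulrA (mulrA h).
by rewrite cproj_mul_compl mul0r mulr0.
Qed.

Lemma compl_cornerM p q : h * p = p -> (1 - h) * q = q -> q * p = 0.
Proof.
move=> hp hq; rewrite -hp -hq -mulrA (mulrA q) -cprojC -mulrA mulrA.
by rewrite cproj_compl_mul mul0r.
Qed.

Lemma mul_corners p1 q1 p2 q2 :
  h * p1 = p1 -> h * q1 = q1 -> (1 - h) * p2 = p2 -> (1 - h) * q2 = q2 ->
  (p1 + p2) * (q1 + q2) = p1 * q1 + p2 * q2.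
Proof.
move=> hp1 hq1 hp2 hq2.
rewrite mulrDl !mulrDr (corner_complM hp1 hq2) (compl_cornerM hq1 hp2).
by rewrite addr0 add0r.
Qed.

Lemma sorth_corner_witness a b : h * a = a -> sorth star a b ->
  exists u,
    [/\ h * u = u, u * a = a, a = a * star u, u * b = 0 & 0 = b * star u].
Proof.
move=> ha [u [E1 [E2 [E3 E4]]]]; exists (h * u).
rewrite cproj_mulK star_cprojM -!mulrA E1 E3 ha mulr0.
by rewrite !mulrA -!cprojC -!mulrA -E2 -E4 ha mulr0.
Qed.

Lemma sorth_cproj a b : sorth star a b -> sorth star (h * a) (h * b).
Proof.
case=> u [E1 [E2 [E3 E4]]]; exists u.
by rewrite !mulrA -!cprojC -!mulrA E1 E3 -E2 -E4 mulr0.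
Qed.

Lemma sequiv_cproj a b : sequiv star a b -> sequiv star (h * a) (h * b).
Proof.
case=> x [y [E1 [E2 [E3 [E4 [E5 [E6 [E7 E8]]]]]]]].
exists (h * x), (h * y); rewrite !star_cprojM !cprojMM.
by repeat split; congr (_ * _).
Qed.

End CentralProjection.

Section Corners.
Variables (h p1 q1 p2 q2 : R).
Hypothesis hP : central_proj star h.
Hypotheses (hp1 : h * p1 = p1) (hq1 : h * q1 = q1).
Hypotheses (hp2 : (1 - h) * p2 = p2) (hq2 : (1 - h) * q2 = q2).

Lemma sorth_corners :
  sorth star p1 q1 -> sorth star p2 q2 -> sorth star (p1 + p2) (q1 + q2).
Proof.
have hP' := cproj_compl hP.
move=> /(sorth_corner_witness hP hp1) [u1 [hu1 E1 E2 E3 E4]].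
move=> /(sorth_corner_witness hP' hp2) [u2 [hu2 F1 F2 F3 F4]].
exists (u1 + u2).
rewrite starD !(mul_corners hP) ?(star_corner hP) ?(star_corner hP') //.
by rewrite E1 F1 -E2 -F2 E3 F3 -E4 -F4 addr0.
Qed.

Lemma sequiv_corners :
  sequiv star p1 q1 -> sequiv star p2 q2 -> sequiv star (p1 + p2) (q1 + q2).
Proof.
have hP' := cproj_compl hP.
move=> [x1 [y1 [E1 [E2 [E3 [E4 [E5 [E6 [E7 E8]]]]]]]]]
  [x2 [y2 [F1 [F2 [F3 [F4 [F5 [F6 [F7 F8]]]]]]]]].
have hx1 : h * x1 = x1 by rewrite E5 corner_mull.
have hy1 : h * y1 = y1 by rewrite E7 corner_mull.
have hx2 : (1 - h) * x2 = x2 by rewrite F5 corner_mull.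
have hy2 : (1 - h) * y2 = y2 by rewrite F7 corner_mull.
exists (x1 + x2), (y1 + y2).
rewrite !starD !(mul_corners hP) ?(star_corner hP) ?(star_corner hP') //.
by repeat split; congr (_ + _).
Qed.

End Corners.

Lemma gen_comparable_decomposition a b : gen_comparable star a b ->
  exists x y z w : R,
    a = x + y /\ b = z + w /\
    sorth star x y /\ sorth star z w /\ sequiv star x z /\
    very_orth star w y.
Proof.
case=> h [hP [[c [ac cb]] [d [bd da]]]].
have hP' := cproj_compl hP.
have hc : h * c = c := sleq_corner cb (cproj_mulK hP b).
have hd : (1 - h) * d = d := sleq_corner da (cproj_mulK hP' a).
have hd0 : h * d = 0 by rewrite -hd mulrA (cproj_mul_compl hP) mul0r.
have hw : h * (h * b - c) = h * b - c by rewrite mulrBr (cproj_mulK hP) hc.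
have hy : (1 - h) * ((1 - h) * a - d) = (1 - h) * a - d.
  by rewrite mulrBr (cproj_mulK hP') hd.
exists (h * a + d), ((1 - h) * a - d), (c + (1 - h) * b), (h * b - c).
split; [by rewrite addrACA subrr addr0 mulrBl mul1r addrC subrK |].
split; [by rewrite addrAC [c + _]addrC subrK mulrBl mul1r addrC subrK |].
split.
  rewrite -[_ - d]add0r.
  apply: (sorth_corners hP) => //; rewrite ?mulr0 ?cproj_mulK //.
    exact: sorthr0.
  exact: sleq_sorth_subr.
split.
  rewrite -[_ - c]addr0.
  apply: (sorth_corners hP) => //; rewrite ?mulr0 ?cproj_mulK //.
    exact: sleq_sorth_subr.
  exact: sorthr0.
split.
  apply: (sequiv_corners hP) => //; rewrite ?cproj_mulK //.
  exact: sequiv_sym.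
by exists h; rewrite hw mulrBr hd0 mulrA (cproj_mul_compl hP) mul0r subr0.
Qed.

Lemma decomposition_gen_comparable x y z w :
  sorth star x y -> sorth star z w -> sequiv star x z -> very_orth star w y ->
  gen_comparable star (x + y) (z + w).
Proof.
move=> xy zw xz [k [kP [kw ky]]].
have kP' := cproj_compl kP.
have kw0 : (1 - k) * w = 0 by rewrite mulrBl mul1r kw subrr.
exists k; split => //; split.
- exists (k * z); split; first by rewrite mulrDr ky addr0; apply: sequiv_cproj.
  by rewrite mulrDr; apply/sorth_sleq_addr/sorth_cproj.
- exists ((1 - k) * x); split.
    by rewrite mulrDr kw0 addr0; apply/sequiv_sym/sequiv_cproj.
  by rewrite mulrDr; apply/sorth_sleq_addr/sorth_cproj.
Qed.

End StarRing.

Theorem mainTheorem11 (R : pzRingType) (star : R -> R)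
    (hstar : is_involution star) (a b : R) :
  gen_comparable star a b <->
  exists x y z w : R,
    a = x + y /\ b = z + w /\
    sorth star x y /\ sorth star z w /\ sequiv star x z /\
    very_orth star w y.
Proof.
split; first exact: gen_comparable_decomposition.
case=> x [y [z [w [-> [-> [xy [zw [xz wy]]]]]]]].
exact: decomposition_gen_comparable.
Qed.
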